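(* Let ${\bm\pi}^*$ be a probability vector on a finite set $\mathbb{A}$ with all entries positive and $\varepsilon=\min_a\pi^*_a$. Then for every probability vector ${\bm\pi}$ on $\mathbb{A}$ with all entries positive, \[ \|{\bm\pi}^*-{\bm\pi}\|_1\ge 2\varepsilon\sqrt{1-\exp\!\big(-D_{\mathrm{KL}}({\bm\pi}^*\|{\bm\pi})/\varepsilon\big)}. \]
   Context: (In the paper, ${\bm\pi}^*$ is the KL projection of the OMWU initialization onto the equilibrium set, which has full support.) *)

From mathcomp Require Import all_boot all_order all_algebra.
From mathcomp Require Import all_classical all_reals all_analysis.
Set Implicit Arguments. Unset Strict Implicit. Unset Printing Implicit Defensive.
Import Order.TTheory GRing.Theory Num.Theory.
Local Open Scope ring_scope.

Definition pos_prob_vec (R : realType) (A : finType) (p : A -> R) : Prop :=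
  (forall a, 0 < p a) /\ \sum_(a : A) p a = 1.

(* minimum entry min_a p a; the initial value 1 is harmless since
   entries of a probability vector are <= 1 (and A is nonempty). *)
Definition min_entry (R : realType) (A : finType) (p : A -> R) : R :=
  \big[Num.min/1]_(a : A) p a.

Definition KL (R : realType) (A : finType) (p q : A -> R) : R :=
  \sum_(a : A) p a * ln (p a / q a).

Definition l1dist (R : realType) (A : finType) (p q : A -> R) : R :=
  \sum_(a : A) `|p a - q a|.

From mathcomp Require Import all_boot all_order all_algebra.
From mathcomp Require Import all_classical all_reals all_analysis.
From mathcomp Require Import ring lra.
Import Order.TTheory GRing.Theory Num.Theory.
Local Open Scope ring_scope.

(* Put d = l1dist and x = d / (2 eps); for x >= 1 the bound is trivial, and
   otherwise it amounts to D_KL <= - eps ln (1 - x^2).  Concavity of ln bounds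
   each summand p_a ln (p_a / q_a), weighted by x, through chords of
   t |-> ln (1 - t) on the positive part of p_a - q_a (at most d/2 <= p_a x)
   and of t |-> ln (1 + t) on its negative part capped at p_a x.  The positive
   parts sum to d/2 = eps x and the capped negative parts to at least eps x,
   whence x D_KL <= - eps x (ln (1 - x) + ln (1 + x)). *)

Section LnChords.
Context {R : realType}.

Lemma concave_ln_comb (t a b : R) : 0 <= t -> t <= 1 -> 0 < a -> 0 < b ->
  t * ln a + (1 - t) * ln b <= ln (t * a + (1 - t) * b).
Proof. by move=> t0 t1 a0 b0; have := concave_ln (Itv01 t0 t1) a0 b0; rewrite !convRE. Qed.

(* Concavity of [y |-> ln (1 + c y)], which vanishes at [0], makes its slopes
   from the origin nonincreasing. *)
Lemma ln1D_chord (c u x : R) : 0 <= u -> u <= x -> 0 < 1 + c * x ->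
  u * ln (1 + c * x) <= x * ln (1 + c * u).
Proof.
move=> u0 ux cx0; have [x0|xneq0] := eqVneq x 0.
  have -> : u = 0 by lra.
  by rewrite x0 !mul0r.
have x0 : 0 < x by rewrite lt_neqAle eq_sym xneq0 (le_trans u0 ux).
have := @concave_ln_comb (u / x) (1 + c * x) 1 (divr_ge0 u0 (ltW x0)) _ cx0 ltr01.
rewrite ler_pdivrMr // mul1r => /(_ ux).
rewrite ln1 mulr0 addr0.
have -> : u / x * (1 + c * x) + (1 - u / x) * 1 = 1 + c * u by field; lra.
by rewrite -(ler_pM2l x0) mulrA mulrCA divff ?gt_eqF // mulr1.
Qed.

Lemma ln1B_chord (u x : R) : 0 <= u -> u <= x -> x < 1 ->
  u * ln (1 - x) <= x * ln (1 - u).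
Proof.
move=> u0 ux x1; have := @ln1D_chord (-1) u x u0 ux.
by rewrite !mulN1r; apply; lra.
Qed.

Lemma min_ln1D_le (v x : R) : 0 <= v -> 0 <= x ->
  Num.min v x * ln (1 + x) <= x * ln (1 + v).
Proof.
move=> v0 x0; have [xv|vx] := leP x v.
  by rewrite ler_wpM2l // ler_ln ?posrE ?lerD2l //; lra.
have := @ln1D_chord 1 v x v0 (ltW vx).
by rewrite !mul1r; apply; lra.
Qed.

Lemma KL_term_le (pa qa x : R) : 0 < pa -> 0 < qa -> 0 <= x -> x < 1 ->
  pa - qa <= pa * x ->
  x * (pa * ln (pa / qa)) <= - ln (1 - x) * Num.max (pa - qa) 0
     - ln (1 + x) * Num.min (Num.max (qa - pa) 0) (pa * x).
Proof.
move=> pa0 qa0 x0 x1 pqx.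
have -> : ln (pa / qa) = - ln (qa / pa).
  by rewrite -lnV ?posrE ?divr_gt0 // invf_div.
have [qp|pq] := leP qa pa.
  rewrite (max_l (_ : 0 <= pa - qa)) ?subr_ge0 //.
  rewrite (max_r (_ : qa - pa <= 0)) ?subr_le0 // min_l ?mulr_ge0 ?(ltW pa0) //.
  have := @ln1B_chord ((pa - qa) / pa) x.
  rewrite divr_ge0 ?subr_ge0 ?(ltW pa0) // ler_pdivrMr // mulrC => /(_ isT pqx x1).
  have -> : 1 - (pa - qa) / pa = qa / pa by field; lra.
  rewrite -(ler_pM2l pa0).
  have -> : pa * ((pa - qa) / pa * ln (1 - x)) = (pa - qa) * ln (1 - x).
    by field; lra.
  lra.
rewrite (max_r (_ : pa - qa <= 0)) ?subr_le0 ?(ltW pq) //.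
rewrite (max_l (_ : 0 <= qa - pa)) ?subr_ge0 ?(ltW pq) //.
have := @min_ln1D_le ((qa - pa) / pa) x.
rewrite divr_ge0 ?subr_ge0 ?(ltW pa0) ?(ltW pq) // => /(_ isT x0).
have -> : 1 + (qa - pa) / pa = qa / pa by field; lra.
move=> /(ler_wpM2l (ltW pa0)) h.
rewrite mulrA minr_pMr ?(ltW pa0) // in h.
have qpE : pa * ((qa - pa) / pa) = qa - pa by field; lra.
rewrite qpE in h; lra.
Qed.

Lemma sqrt_1B_expR_le (K e x : R) : 0 < e -> 0 <= x -> x < 1 ->
  K <= - e * ln (1 - x ^+ 2) -> Num.sqrt (1 - expR (- (K / e))) <= x.
Proof.
move=> e0 x0 x1 Kle; have x2 : 0 < 1 - x ^+ 2 by nra.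
have : 1 - x ^+ 2 <= expR (- (K / e)).
  by rewrite -[leLHS]lnK ?posrE // ler_expR lerNr ler_pdivrMr // mulrC; lra.
by move=> ?; rewrite -[leRHS]ger0_norm // -sqrtr_sqr ler_sqrt ?sqr_ge0 //; lra.
Qed.

End LnChords.

Section ProbabilityVectors.
Context {R : realType} {A : finType}.
Implicit Types (p q : A -> R) (a : A).

Lemma min_entry_le p a : min_entry p <= p a.
Proof. exact: bigmin_le. Qed.

Lemma min_entry_gt0 p : (forall a, 0 < p a) -> 0 < min_entry p.
Proof. by move=> p0; apply: lt_bigmin. Qed.

Lemma l1distC p q : l1dist p q = l1dist q p.
Proof. by apply: eq_bigr => a _; rewrite distrC. Qed.

Lemma sum_pos_part_l1dist p q : \sum_a p a = \sum_a q a ->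
  \sum_a Num.max (p a - q a) 0 = l1dist p q / 2.
Proof.
move=> pq; have sum0 : \sum_a (p a - q a) = 0 by rewrite sumrB pq subrr.
rewrite (eq_bigr (fun a => (`|p a - q a| + (p a - q a)) / 2)).
  by rewrite -mulr_suml big_split /= sum0 addr0.
move=> a _; have [pqa|pqa] := leP (p a - q a) 0.
  by rewrite ler0_norm //; field.
by rewrite gtr0_norm //; field.
Qed.

Lemma pos_part_le_half_l1dist {p q} a : \sum_b p b = \sum_b q b ->
  p a - q a <= l1dist p q / 2.
Proof.
move=> pq; rewrite -sum_pos_part_l1dist // (bigD1 a) //=.
have : 0 <= \sum_(b | b != a) Num.max (p b - q b) 0.
  by apply: sumr_ge0 => b _; rewrite le_max lexx orbT.
have : p a - q a <= Num.max (p a - q a) 0 by rewrite le_max lexx.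
lra.
Qed.

(* If some [g a] falls below [f a], that single summand already reaches [c];
   otherwise the sum of minima is the whole of [\sum f]. *)
Lemma sum_min_ge (f g : A -> R) (c : R) :
  (forall a, 0 <= f a) -> (forall a, 0 <= g a) -> (forall a, c <= g a) ->
  Num.min c (\sum_a f a) <= \sum_a Num.min (f a) (g a).
Proof.
move=> f0 g0 cg.
have min0 b : 0 <= Num.min (f b) (g b) by rewrite le_min f0 g0.
have [[a gfa]|] := pselect (exists a, g a <= f a).
  rewrite [leRHS](bigD1 a) //= (min_idPr gfa).
  have : 0 <= \sum_(b | b != a) Num.min (f b) (g b) by exact: sumr_ge0.
  have : Num.min c (\sum_a f a) <= c by rewrite ge_min lexx.
  have := cg a; lra.
move=> /forallNP fg; rewrite [leRHS](eq_bigr f) ?ge_min ?lexx ?orbT // => b _.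
by apply/min_idPl; rewrite leNgt; apply/negP => /ltW gfb; apply: (fg b).
Qed.

Lemma l1dist_ge0 p q : 0 <= l1dist p q.
Proof. exact: sumr_ge0. Qed.

Lemma KL_scaled_le {p q} {x : R} : pos_prob_vec p -> pos_prob_vec q ->
  l1dist p q = 2 * min_entry p * x -> 0 <= x -> x < 1 ->
  x * KL p q <= - (min_entry p * x) * ln (1 - x ^+ 2).
Proof.
move=> [p0 p1] [q0 q1] dx x0 x1; set e := min_entry p in dx *.
have pq : \sum_a p a = \sum_a q a by rewrite p1 q1.
have half_d : l1dist p q / 2 = e * x by rewrite dx; field.
have pqx a : p a - q a <= p a * x.
  rewrite (le_trans (pos_part_le_half_l1dist a pq)) // half_d.
  by rewrite ler_wpM2r // min_entry_le.
set Nm := fun a => Num.min (Num.max (q a - p a) 0) (p a * x).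
have sumNm : e * x <= \sum_a Nm a.
  have := @sum_min_ge (fun a => Num.max (q a - p a) 0) (fun a => p a * x) (e * x).
  rewrite sum_pos_part_l1dist 1?eq_sym // l1distC half_d minxx; apply.
  - by move=> a; rewrite le_max lexx orbT.
  - by move=> a; rewrite mulr_ge0 ?(ltW (p0 a)).
  - by move=> a; rewrite ler_wpM2r // min_entry_le.
have -> : 1 - x ^+ 2 = (1 - x) * (1 + x) by ring.
rewrite lnM ?posrE; [|lra|lra].
rewrite /KL mulr_sumr; apply: le_trans (_ : \sum_a
  (- ln (1 - x) * Num.max (p a - q a) 0 - ln (1 + x) * Nm a) <= _).
  by apply: ler_sum => a _; exact: KL_term_le (p0 a) (q0 a) x0 x1 (pqx a).
rewrite sumrB -!mulr_sumr sum_pos_part_l1dist // half_d.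
have : ln (1 + x) * (e * x) <= ln (1 + x) * \sum_a Nm a.
  by rewrite ler_wpM2l // ln_ge0 // lerDl.
lra.
Qed.

Lemma KL_le_ln1B_sqr {p q} {x : R} : pos_prob_vec p -> pos_prob_vec q ->
  l1dist p q = 2 * min_entry p * x -> x < 1 ->
  KL p q <= - min_entry p * ln (1 - x ^+ 2).
Proof.
move=> hp hq dx x1; have [p0 p1] := hp; have [q0 q1] := hq.
have e0 : 0 < min_entry p by exact: min_entry_gt0.
have x0 : 0 <= x.
  by rewrite -(pmulr_rge0 _ (_ : 0 < 2 * min_entry p)) -?dx ?l1dist_ge0 //; lra.
have [x_eq0|xneq0] := eqVneq x 0; last first.
  have xpos : 0 < x by rewrite lt_neqAle eq_sym xneq0.
  rewrite -(ler_pM2l xpos) (_ : x * (_ * _) = - (min_entry p * x) * ln (1 - x ^+ 2)).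
    exact: KL_scaled_le.
  by ring.
have pq : \sum_a p a = \sum_a q a by rewrite p1 q1.
have pqa a : p a = q a.
  have := pos_part_le_half_l1dist a pq.
  have := pos_part_le_half_l1dist a (esym pq).
  rewrite l1distC dx x_eq0 mulr0 mul0r; lra.
rewrite x_eq0 expr0n subr0 ln1 mulr0 /KL big1 // => a _.
by rewrite pqa divff ?gt_eqF // ln1 mulr0.
Qed.

End ProbabilityVectors.

Theorem mainTheorem15 (R : realType) (A : finType) (pistar pi : A -> R) :
  pos_prob_vec pistar -> pos_prob_vec pi ->
  l1dist pistar pi >=
    2 * min_entry pistar *
    Num.sqrt (1 - expR (- (KL pistar pi / min_entry pistar))).
Proof.
move=> hp hq; set e := min_entry pistar; set d := l1dist pistar pi.
have e0 : 0 < e by apply: min_entry_gt0; case: hp.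
have [d_big|d_small] := leP (2 * e) d.
  apply: le_trans d_big; rewrite ler_piMr ?sqrtr_ge0 //; first lra.
  by rewrite -[leRHS]sqrtr1 ler_sqrt // gerBl expR_ge0.
have dx : d = 2 * e * (d / (2 * e)) by field; lra.
have x0 : 0 <= d / (2 * e) by rewrite divr_ge0 ?l1dist_ge0 //; lra.
have x1 : d / (2 * e) < 1 by rewrite ltr_pdivrMr ?mul1r //; lra.
rewrite [leRHS]dx; apply: ler_wpM2l; first lra.
exact: sqrt_1B_expR_le e0 x0 x1 (KL_le_ln1B_sqr hp hq dx x1).
Qed.
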